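(* Let $T$ be an $\mathcal O$-operator on a Lie algebra $\mathfrak g$ with respect to a representation $(V;\rho)$. Then for any Nijenhuis element $x\in\mathrm{Nij}(T)$, setting $\mathfrak T:=d_{\bar\rho}x$, i.e. $\mathfrak T(u)=[Tu,x]+T\rho(x)(u)$, the family $T_t:=T+t\mathfrak T$ is a trivial one-parameter infinitesimal deformation of $T$.
   Context: An $\mathcal O$-operator: linear $T:V\to\mathfrak g$ with $[Tu,Tv]=T(\rho(Tu)(v)-\rho(Tv)(u))$. An element $x\in\mathfrak g$ is a Nijenhuis element associated to $T$ (written $x\in\mathrm{Nij}(T)$) if $[[x,y],[x,z]]=0$ for all $y,z\in\mathfrak g$, $\rho([x,y])\rho(x)=0$ for all $y\in\mathfrak g$, and $[x,[Tu,x]+T\rho(x)(u)]=0$ for all $u\in V$. A one-parameter infinitesimal deformation of $T$ is $T+t\mathfrak T$ ($\mathfrak T:V\to\mathfrak g$ linear) which is an $\mathcal O$-operator for every scalar $t$; it is trivial if there is $x\in\mathfrak g$ such that $(\mathrm{Id}_{\mathfrak g}+t\,\mathrm{ad}_x,\mathrm{Id}_V+t\rho(x))$ is a homomorphism from $T+t\mathfrak T$ to $T$, where a homomorphism from an $\mathcal O$-operator $T'$ to $T$ is a pair of a Lie algebra homomorphism $\phi_{\mathfrak g}:\mathfrak g\to\mathfrak g$ and a linear $\phi_V:V\to V$ with $T\circ\phi_V=\phi_{\mathfrak g}\circ T'$ and $\phi_V\rho(y)(u)=\rho(\phi_{\mathfrak g}(y))(\phi_V(u))$ for all $y\in\mathfrak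 g,u\in V$. *)

From HB Require Import structures.
From mathcomp Require Import all_boot all_order all_algebra.
Set Implicit Arguments. Unset Strict Implicit. Unset Printing Implicit Defensive.
Import GRing.Theory.
Local Open Scope ring_scope.

Section Lie.
Variable K : fieldType.

Definition klinear (U W : lmodType K) (f : U -> W) : Prop :=
  forall (a : K) (u v : U), f (a *: u + v) = a *: f u + f v.

Record is_lie_bracket (g : lmodType K) (br : g -> g -> g) : Prop := {
  br_linl : forall z : g, klinear (fun x => br x z);
  br_linr : forall x : g, klinear (br x);
  br_alt : forall x : g, br x x = 0;
  br_jacobi : forall x y z : g,
    br x (br y z) + br y (br z x) + br z (br x y) = 0 }.

Record is_lie_rep (g V : lmodType K) (br : g -> g -> g) (rho : g -> V -> V)
  : Prop := {
  rho_linl : forall (a : K) (x y : g) (u : V),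
    rho (a *: x + y) u = a *: rho x u + rho y u;
  rho_linr : forall x : g, klinear (rho x);
  rho_br : forall (x y : g) (u : V),
    rho (br x y) u = rho x (rho y u) - rho y (rho x u) }.

Definition O_operator (g V : lmodType K) (br : g -> g -> g) (rho : g -> V -> V)
  (T : V -> g) : Prop :=
  klinear T /\
  forall u v : V, br (T u) (T v) = T (rho (T u) v - rho (T v) u).

Definition Nij (g V : lmodType K) (br : g -> g -> g) (rho : g -> V -> V)
  (T : V -> g) (x : g) : Prop :=
  (forall y z : g, br (br x y) (br x z) = 0) /\
  (forall (y : g) (u : V), rho (br x y) (rho x u) = 0) /\
  (forall u : V, br x (br (T u) x + T (rho x u)) = 0).

Definition lie_hom (g : lmodType K) (br : g -> g -> g) (phi : g -> g) : Prop :=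
  klinear phi /\ forall y z : g, phi (br y z) = br (phi y) (phi z).

Definition O_hom (g V : lmodType K) (br : g -> g -> g) (rho : g -> V -> V)
  (T' T : V -> g) (phig : g -> g) (phiV : V -> V) : Prop :=
  [/\ lie_hom br phig, klinear phiV,
      (forall u : V, T (phiV u) = phig (T' u)) &
      (forall (y : g) (u : V), phiV (rho y u) = rho (phig y) (phiV u))].

Definition inf_deformation (g V : lmodType K) (br : g -> g -> g)
  (rho : g -> V -> V) (T TT : V -> g) : Prop :=
  klinear TT /\
  forall t : K, O_operator br rho (fun u => T u + t *: TT u).

Definition trivial_inf_deformation (g V : lmodType K) (br : g -> g -> g)
  (rho : g -> V -> V) (T TT : V -> g) : Prop :=
  inf_deformation br rho T TT /\
  exists x : g, forall t : K,
    O_hom br rho (fun u => T u + t *: TT u) T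
      (fun y => y + t *: br x y) (fun u => u + t *: rho x u).

End Lie.

From HB Require Import structures.
From mathcomp Require Import all_boot all_order all_algebra.
Set Implicit Arguments. Unset Strict Implicit. Unset Printing Implicit Defensive.
Import GRing.Theory.
Local Open Scope ring_scope.

(* Write D := d x, so that T (rho x u) = D u + [x, T u].  Expanding T + t D in
   powers of t, it is an O-operator for every t as soon as D is a 1-cocycle of T
   (the coefficient of t), which every coboundary is, and D satisfies the
   O-operator identity itself (the coefficient of t^2).  The latter follows from
   the Nijenhuis conditions by expanding [T (rho x u), T (rho x v)] in two ways.
   The same conditions kill the t^2-terms obstructing
   (Id + t ad_x, Id + t rho x) from being a homomorphism from T + t D to T. *)

Section KLinear.
Variables (K : fieldType) (U W : lmodType K) (f : U -> W).
Hypothesis f_lin : klinear f.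

Lemma klinearD u v : f (u + v) = f u + f v.
Proof. by have := f_lin 1 u v; rewrite !scale1r. Qed.

Lemma klinear0 : f 0 = 0.
Proof. by apply: (addrI (f 0)); rewrite -klinearD !addr0. Qed.

Lemma klinearZ a u : f (a *: u) = a *: f u.
Proof. by have := f_lin a u 0; rewrite !addr0 klinear0 addr0. Qed.

Lemma klinearN u : f (- u) = - f u.
Proof. by rewrite -scaleN1r klinearZ scaleN1r. Qed.

Lemma klinearB u v : f (u - v) = f u - f v.
Proof. by rewrite klinearD klinearN. Qed.

End KLinear.

Lemma klinear_addZ (K : fieldType) (U W : lmodType K) (f h : U -> W) (t : K) :
  klinear f -> klinear h -> klinear (fun u => f u + t *: h u).
Proof.
move=> f_lin h_lin a u v.
by rewrite f_lin h_lin scalerDr !scalerA mulrC -scalerA scalerDr addrACA.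
Qed.

Section LieRepresentation.
Variables (K : fieldType) (g V : lmodType K).
Variables (br : g -> g -> g) (rho : g -> V -> V).
Hypotheses (br_lie : is_lie_bracket br) (rho_rep : is_lie_rep br rho).

Let brl z : klinear (br^~ z). Proof. exact: br_linl. Qed.
Let brr y : klinear (br y). Proof. exact: br_linr. Qed.

Lemma brDl y z w : br (y + z) w = br y w + br z w.
Proof. exact: (klinearD (brl w)). Qed.
Lemma brDr w y z : br w (y + z) = br w y + br w z.
Proof. exact: (klinearD (brr w)). Qed.
Lemma brBl y z w : br (y - z) w = br y w - br z w.
Proof. exact: (klinearB (brl w)). Qed.
Lemma brBr w y z : br w (y - z) = br w y - br w z.
Proof. exact: (klinearB (brr w)). Qed.
Lemma brZl a y w : br (a *: y) w = a *: br y w.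
Proof. exact: (klinearZ (brl w)). Qed.
Lemma brZr a w y : br w (a *: y) = a *: br w y.
Proof. exact: (klinearZ (brr w)). Qed.
Lemma brNr w y : br w (- y) = - br w y. Proof. exact: (klinearN (brr w)). Qed.
Lemma br0l y : br 0 y = 0. Proof. exact: (klinear0 (brl y)). Qed.
Lemma br0r y : br y 0 = 0. Proof. exact: (klinear0 (brr y)). Qed.

Lemma brC y z : br y z = - br z y.
Proof.
apply/eqP; rewrite -addr_eq0; apply/eqP.
have br_yy := br_alt br_lie.
by have := br_yy (y + z); rewrite brDl !brDr !br_yy add0r addr0.
Qed.

Lemma br_derivation x y z : br x (br y z) = br (br x y) z + br y (br x z).
Proof.
have := br_jacobi br_lie x y z.
rewrite [br z x]brC brNr [br z _]brC -addrA -opprD => /eqP.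
by rewrite subr_eq0 addrC => /eqP.
Qed.

Lemma lie_hom_id_addZ_ad x t :
  (forall y z, br (br x y) (br x z) = 0) ->
  lie_hom br (fun y => y + t *: br x y).
Proof.
move=> adx_abelian; split=> [|y z]; first exact: klinear_addZ.
rewrite brDl !brDr !brZl !brZr adx_abelian !scaler0 addr0 br_derivation.
by rewrite scalerDr addrA (addrAC _ (t *: _)).
Qed.

Let rhol u : klinear (rho^~ u).
Proof. by move=> a y z; rewrite (rho_linl rho_rep). Qed.
Let rhor y : klinear (rho y). Proof. exact: (rho_linr rho_rep). Qed.

Lemma rhoDl y z u : rho (y + z) u = rho y u + rho z u.
Proof. exact: (klinearD (rhol u)). Qed.
Lemma rhoBl y z u : rho (y - z) u = rho y u - rho z u.
Proof. exact: (klinearB (rhol u)). Qed.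
Lemma rhoZl a y u : rho (a *: y) u = a *: rho y u.
Proof. exact: (klinearZ (rhol u)). Qed.
Lemma rho0l u : rho 0 u = 0. Proof. exact: (klinear0 (rhol u)). Qed.
Lemma rhoDr y u v : rho y (u + v) = rho y u + rho y v.
Proof. exact: (klinearD (rhor y)). Qed.
Lemma rhoBr y u v : rho y (u - v) = rho y u - rho y v.
Proof. exact: (klinearB (rhor y)). Qed.
Lemma rhoZr a y u : rho y (a *: u) = a *: rho y u.
Proof. exact: (klinearZ (rhor y)). Qed.

Lemma rho_comm x y u : rho x (rho y u) = rho (br x y) u + rho y (rho x u).
Proof. by rewrite (rho_br rho_rep) subrK. Qed.

Lemma id_addZ_rho_equivariant x t y u :
  (forall y u, rho (br x y) (rho x u) = 0) ->
  rho y u + t *: rho x (rho y u) = rho (y + t *: br x y) (u + t *: rho x u).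
Proof.
move=> rho_adx_x; rewrite rho_comm rhoDl rhoZl !rhoDr !rhoZr rho_adx_x !scaler0.
by rewrite addr0 scalerDr addrA (addrAC _ (t *: _)).
Qed.

Section OOperator.
Variable T : V -> g.
Hypothesis T_O : O_operator br rho T.

Let T_lin : klinear T. Proof. by case: T_O. Qed.
Let T_br u v : br (T u) (T v) = T (rho (T u) v - rho (T v) u).
Proof. by case: T_O. Qed.

Definition O_cocycle (D : V -> g) := forall u v,
  br (D u) (T v) + br (T u) (D v) =
  T (rho (D u) v - rho (D v) u) + D (rho (T u) v - rho (T v) u).

Lemma O_operator_addZ (D : V -> g) (t : K) :
  klinear D -> O_cocycle D ->
  (forall u v, br (D u) (D v) = D (rho (D u) v - rho (D v) u)) ->
  O_operator br rho (fun u => T u + t *: D u).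
Proof.
move=> D_lin D_cocycle D_br; split=> [|u v]; first exact: klinear_addZ.
have -> : rho (T u + t *: D u) v - rho (T v + t *: D v) u =
          (rho (T u) v - rho (T v) u) + t *: (rho (D u) v - rho (D v) u).
  by rewrite !rhoDl !rhoZl opprD addrACA scalerBr.
rewrite (klinearD T_lin) (klinearD D_lin) (klinearZ T_lin) (klinearZ D_lin).
rewrite brDl !brDr !brZl !brZr D_br T_br -!addrA -!scalerDr.
by congr (_ + t *: _); rewrite !addrA [br (T u) _ + _]addrC D_cocycle.
Qed.

Definition O_coboundary (x : g) (u : V) : g := br (T u) x + T (rho x u).

Lemma O_coboundaryE x u : O_coboundary x u = T (rho x u) - br x (T u).
Proof. by rewrite /O_coboundary brC addrC. Qed.

Lemma klinear_O_coboundary x : klinear (O_coboundary x).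
Proof.
move=> a u v; rewrite /O_coboundary T_lin brDl brZl rhoDr rhoZr T_lin.
by rewrite scalerDr addrACA.
Qed.

Lemma O_coboundary_cocycle x : O_cocycle (O_coboundary x).
Proof.
move=> u v; rewrite !O_coboundaryE brBl brBr (T_br _ v) (T_br u).
rewrite -(T_br u v) (br_derivation x) addrACA -opprD addrA -!(klinearD T_lin).
congr (T _ - _); rewrite !rhoBl rhoBr !(rho_comm x).
by rewrite addrACA -opprD [RHS]addrACA subrKA -opprD subrKA (addrC (rho _ u)).
Qed.

Section NijenhuisElement.
Variable x : g.
Hypothesis x_Nij : Nij br rho T x.

Let adx_abelian y z : br (br x y) (br x z) = 0.
Proof. exact: (proj1 x_Nij). Qed.
Let rho_adx_x y u : rho (br x y) (rho x u) = 0.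
Proof. exact: (proj1 (proj2 x_Nij)). Qed.
Let adx_O_coboundary u : br x (O_coboundary x u) = 0.
Proof. exact: (proj2 (proj2 x_Nij)). Qed.

Local Notation D := (O_coboundary x).

Let T_rho_x u : T (rho x u) = D u + br x (T u).
Proof. by rewrite O_coboundaryE subrK. Qed.

Lemma O_coboundary_br u v : br (D u) (D v) = D (rho (D u) v - rho (D v) u).
Proof.
set w := rho (D u) v - rho (D v) u.
have br_T_rho_x : br (T (rho x u)) (T (rho x v)) = T (rho x w).
  rewrite T_br /w rhoBr !(rho_comm x) !adx_O_coboundary !rho0l !add0r.
  by rewrite !T_rho_x !rhoDl !rho_adx_x !addr0.
have adx_T_w : br x (T w) = br (D u) (br x (T v)) + br (br x (T u)) (D v).
  have -> : T w = br (D u) (T v) + br (T u) (D v) - D (rho (T u) v - rho (T v) u).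
    by rewrite O_coboundary_cocycle addrK.
  rewrite brBr adx_O_coboundary subr0 brDr !(br_derivation x) !adx_O_coboundary.
  by rewrite br0l br0r add0r addr0.
have := T_rho_x w; rewrite -br_T_rho_x (T_rho_x u) (T_rho_x v).
rewrite brDl (brDr (D u)) (brDr (br x (T u))) adx_abelian addr0 -addrA.
by rewrite -adx_T_w => /addIr.
Qed.

Lemma O_hom_id_addZ t :
  O_hom br rho (fun u => T u + t *: D u) T
    (fun y => y + t *: br x y) (fun u => u + t *: rho x u).
Proof.
split=> [||u|y u].
- exact: lie_hom_id_addZ_ad.
- exact: klinear_addZ (rhor x).
- rewrite (klinearD T_lin) (klinearZ T_lin) T_rho_x brDr brZr adx_O_coboundary.
  by rewrite scaler0 addr0 scalerDr addrA.
- exact: id_addZ_rho_equivariant.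
Qed.

End NijenhuisElement.
End OOperator.
End LieRepresentation.

Theorem theorem4p9 (K : fieldType) (g V : lmodType K)
  (br : g -> g -> g) (rho : g -> V -> V) (T : V -> g) (x : g) :
  is_lie_bracket br -> is_lie_rep br rho -> O_operator br rho T ->
  Nij br rho T x ->
  trivial_inf_deformation br rho T (fun u => br (T u) x + T (rho x u)).
Proof.
move=> br_lie rho_rep T_O x_Nij.
have D_lin := klinear_O_coboundary br_lie rho_rep T_O x.
have D_cocycle := O_coboundary_cocycle br_lie rho_rep T_O x.
have D_br := O_coboundary_br br_lie rho_rep T_O x_Nij.
split; first by split=> // t; exact: O_operator_addZ.
by exists x; exact: O_hom_id_addZ.
Qed.
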